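(* An allocation algorithm $A$ is truthful without money and with verification for CAs with known $k$-minded bidders if and only if $A$ is $k$-monotone, where $A$ is called $k$-monotone if for every bidder $i$, every $\mathbf b_{-i}$ and every $a\in D_i$: if $A_i(a,\mathbf b_{-i})=S$ then for every $c\in D_i$ with $c(S)\ge a(S)$ we have $c(A_i(c,\mathbf b_{-i}))\ge c(S)$.
   Context: Combinatorial auction setting: a set $\mathsf U$ of $m$ goods (single supply) and $n$ bidders. The true type of bidder $i$ is $t_i=(v_i,\mathcal S_i)$, where $\mathcal S_i$ is a collection of $k$ nonempty subsets of $\mathsf U$ and $v_i:\mathcal S_i\to\mathbb R_{\ge0}$, extended to all $S\subseteq\mathsf U$ by $v_i(S)=\max\{v_i(S'):S'\in\mathcal S_i,\ S'\subseteq S\}$ ($0$ if none; $v_i(\emptyset)=0$). Known bidders: $\mathcal S_i$ is public, so a declaration of bidder $i$ is a valuation $z:\mathcal S_i\to\mathbb R_{\ge0}$ (extended the same way), and $D_i$ is the set of all such declarations; for a declaration $c$ and set $S$, $c(S)$ denotes the declared (extended) value. An allocation algorithm $A$ maps declaration profiles $\mathbf b$ to pairwise disjoint sets with $A_i(\mathbf b)\in\mathcal S_i\cup\{\emptyset\}$ (exactness). Verification: bidder $i$ with true valuation $v_i$, facing $\mathbf b_{-i}$, may declare $b_i$ only if $b_i(A_i(b_i,\mathbf b_{-i}))\le v_i(A_i(b_i,\mathbf b_{-i}))$. $A$ is truthful without money and with verification if for all $i$, $\mathbf b_{-i}$, true $v_i\in D_i$, and declarations $b_i\in D_i$ permitted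 by verification, $v_i(A_i(v_i,\mathbf b_{-i}))\ge v_i(A_i(b_i,\mathbf b_{-i}))$. *)

From HB Require Import structures.
From mathcomp Require Import all_boot all_order all_algebra.
Set Implicit Arguments. Unset Strict Implicit. Unset Printing Implicit Defensive.
Import Order.TTheory GRing.Theory Num.Theory.
Local Open Scope ring_scope.

(* Bidder i has the public collection
   Sc i : {set {set U}} of k nonempty bundles.
   A declaration of bidder i is represented as a function z : {set U} -> R
   that is nonnegative on Sc i and zero off Sc i (canonical representative of
   a map Sc i -> R_{>=0}). *)

Definition decl (U : finType) (R : realFieldType) (Sc : {set {set U}})
  (z : {set U} -> R) : Prop :=
  forall T : {set U}, (T \in Sc -> 0 <= z T) /\ (T \notin Sc -> z T = 0).

Definition ext (U : finType) (R : realFieldType) (Sc : {set {set U}})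
  (z : {set U} -> R) (T : {set U}) : R :=
  \big[Num.max/0]_(S' in Sc | S' \subset T) z S'.

Definition upd (n : nat) (X : Type) (b : 'I_n -> X) (i : 'I_n) (a : X)
  : 'I_n -> X := fun j => if j == i then a else b j.

Definition is_alloc (U : finType) (R : realFieldType) (n : nat)
  (Sc : 'I_n -> {set {set U}})
  (A : ('I_n -> {set U} -> R) -> 'I_n -> {set U}) : Prop :=
  forall b : 'I_n -> {set U} -> R, (forall j, decl (Sc j) (b j)) ->
    (forall i, A b i \in Sc i \/ A b i = set0) /\
    (forall i j, i != j -> [disjoint A b i & A b j]).

Definition truthful_verif (U : finType) (R : realFieldType) (n : nat)
  (Sc : 'I_n -> {set {set U}})
  (A : ('I_n -> {set U} -> R) -> 'I_n -> {set U}) : Prop :=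
  forall (i : 'I_n) (b : 'I_n -> {set U} -> R),
    (forall j, j != i -> decl (Sc j) (b j)) ->
  forall v bi : {set U} -> R, decl (Sc i) v -> decl (Sc i) bi ->
    let Sb := A (upd b i bi) i in
    ext (Sc i) bi Sb <= ext (Sc i) v Sb ->
    ext (Sc i) v Sb <= ext (Sc i) v (A (upd b i v) i).

Definition k_monotone (U : finType) (R : realFieldType) (n : nat)
  (Sc : 'I_n -> {set {set U}})
  (A : ('I_n -> {set U} -> R) -> 'I_n -> {set U}) : Prop :=
  forall (i : 'I_n) (b : 'I_n -> {set U} -> R),
    (forall j, j != i -> decl (Sc j) (b j)) ->
  forall a : {set U} -> R, decl (Sc i) a ->
    let S := A (upd b i a) i in
    forall c : {set U} -> R, decl (Sc i) c ->
      ext (Sc i) a S <= ext (Sc i) c S ->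
      ext (Sc i) c S <= ext (Sc i) c (A (upd b i c) i).

From HB Require Import structures.
From mathcomp Require Import all_boot all_order all_algebra.
Import Order.TTheory GRing.Theory Num.Theory.
Local Open Scope ring_scope.

(* Verification lets bidder i
   with true valuation v declare bi exactly when bi(S) <= v(S) for the bundle
   S = A_i(bi, b_{-i}) it then receives; truthfulness asks that in that case
   v(S) <= v(A_i(v, b_{-i})).  Reading the declared valuation bi as the
   valuation a of k-monotonicity (so S = A_i(a, b_{-i})) and the true
   valuation v as the valuation c, this is verbatim the k-monotonicity
   condition "a(S) <= c(S) implies c(S) <= c(A_i(c, b_{-i}))". *)

(* Both properties quantify over the same data; only the names of the lie and
   of the true valuation are exchanged. *)
Lemma truthful_verifE (U : finType) (R : realFieldType) (n : nat)
    (Sc : 'I_n -> {set {set U}})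
    (A : ('I_n -> {set U} -> R) -> 'I_n -> {set U}) :
  truthful_verif Sc A <-> k_monotone Sc A.
Proof.
rewrite /truthful_verif /k_monotone /=; split.
- move=> truthful i b b_decl a a_decl c c_decl lie_allowed.
  exact: (truthful i b b_decl c a c_decl a_decl lie_allowed).
- move=> monotone i b b_decl v bi v_decl bi_decl lie_allowed.
  exact: (monotone i b b_decl bi bi_decl v v_decl lie_allowed).
Qed.

Theorem theorem1 (U : finType) (R : realFieldType) (n k : nat)
  (Sc : 'I_n -> {set {set U}})
  (hk : forall i, #|Sc i| = k)
  (hne : forall i, set0 \notin Sc i)
  (A : ('I_n -> {set U} -> R) -> 'I_n -> {set U})
  (hA : is_alloc Sc A) :
  truthful_verif Sc A <-> k_monotone Sc A.
Proof. exact: truthful_verifE. Qed.
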